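(* Let $A$ be a quasi-quantale. Then the set $NI(A)$ of idiomatic nuclei on $A$, ordered pointwise ($f\leq g$ iff $f(a)\leq g(a)$ for all $a\in A$), is a frame.
   Context: A quasi-quantale is a complete lattice $A$ equipped with an associative binary operation $(a,b)\mapsto ab$ such that for every directed subset $X\subseteq A$ (non-empty, and any two elements of $X$ have an upper bound in $X$) and every $a\in A$: $(\bigvee X)a=\bigvee\{xa\mid x\in X\}$ and $a(\bigvee X)=\bigvee\{ax\mid x\in X\}$. An inflator on $A$ is a monotone map $p\colon A\to A$ with $a\leq p(a)$ for all $a$. An idiomatic pre-nucleus is an inflator $p$ such that $p(a)p(b)\leq p(ab)=p(a\wedge b)=p(a)\wedge p(b)$ for all $a,b\in A$; an idiomatic nucleus is an idiomatic pre-nucleus $p$ with $p\circ p=p$. A frame is a complete lattice satisfying $a\wedge\bigvee X=\bigvee\{a\wedge x\mid x\in X\}$ for all $a$ and all subsets $X$. *)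

From Stdlib Require Import Classical FunctionalExtensionality PropExtensionality.

Set Implicit Arguments.

Definition is_partial_order (T : Type) (le : T -> T -> Prop) : Prop :=
  (forall x, le x x) /\
  (forall x y z, le x y -> le y z -> le x z) /\
  (forall x y, le x y -> le y x -> x = y).

Definition is_ub (T : Type) (le : T -> T -> Prop) (X : T -> Prop) (s : T) : Prop :=
  forall x, X x -> le x s.

Definition is_lub (T : Type) (le : T -> T -> Prop) (X : T -> Prop) (s : T) : Prop :=
  is_ub le X s /\ forall u, is_ub le X u -> le s u.

Definition is_glb2 (T : Type) (le : T -> T -> Prop) (a b m : T) : Prop :=
  le m a /\ le m b /\ forall u, le u a -> le u b -> le u m.

Definition is_frame (T : Type) (le : T -> T -> Prop) : Prop :=
  is_partial_order le /\
  (forall X : T -> Prop, exists s, is_lub le X s) /\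
  (forall (a : T) (X : T -> Prop) (s m : T),
      is_lub le X s -> is_glb2 le a s m ->
      is_lub le (fun y => exists x, X x /\ is_glb2 le a x y) m).

Record CompleteLattice := {
  cl_car :> Type;
  cl_le : cl_car -> cl_car -> Prop;
  cl_sup : (cl_car -> Prop) -> cl_car;
  cl_po : is_partial_order cl_le;
  cl_sup_lub : forall X, is_lub cl_le X (cl_sup X)
}.

Definition cl_meet (L : CompleteLattice) (a b : L) : L :=
  cl_sup L (fun x => cl_le L x a /\ cl_le L x b).

Definition directed (L : CompleteLattice) (X : L -> Prop) : Prop :=
  (exists x, X x) /\
  (forall x y, X x -> X y -> exists z, X z /\ cl_le L x z /\ cl_le L y z).

Record QuasiQuantale := {
  qq_lat :> CompleteLattice;
  qq_mul : qq_lat -> qq_lat -> qq_lat;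
  qq_mulA : forall a b c, qq_mul a (qq_mul b c) = qq_mul (qq_mul a b) c;
  qq_mul_supl : forall (X : qq_lat -> Prop) (a : qq_lat), @directed qq_lat X ->
      qq_mul (cl_sup qq_lat X) a = cl_sup qq_lat (fun y => exists x, X x /\ y = qq_mul x a);
  qq_mul_supr : forall (X : qq_lat -> Prop) (a : qq_lat), @directed qq_lat X ->
      qq_mul a (cl_sup qq_lat X) = cl_sup qq_lat (fun y => exists x, X x /\ y = qq_mul a x)
}.

Section Nuclei.
Variable A : QuasiQuantale.

Local Notation le := (cl_le A).
Local Notation mul := (qq_mul A).
Local Notation meet := (cl_meet A).

Definition inflator (p : A -> A) : Prop :=
  (forall a b, le a b -> le (p a) (p b)) /\ (forall a, le a (p a)).

Definition idiomatic_prenucleus (p : A -> A) : Prop :=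
  inflator p /\
  (forall a b, le (mul (p a) (p b)) (p (mul a b))) /\
  (forall a b, p (mul a b) = p (meet a b)) /\
  (forall a b, p (meet a b) = meet (p a) (p b)).

Definition idiomatic_nucleus (p : A -> A) : Prop :=
  idiomatic_prenucleus p /\ (forall a, p (p a) = p a).

Definition NI : Type := { p : A -> A | idiomatic_nucleus p }.

Definition NI_le (f g : NI) : Prop := forall a, le (proj1_sig f a) (proj1_sig g a).

End Nuclei.

(* Meets of idiomatic nuclei are computed pointwise. The join of a family X
   sends a to the least element above a that is a prefixed point of every
   member of X and of the least idiomatic nucleus (the pointwise infimum of
   all of them, needed so that the join of the empty family is idiomatic).
   Properties of this closure are proved by induction along it: by a
   Pataraia-style fixed point argument, the closure of a lies below some
   member of any set that contains a and is closed under the nuclei and under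
   directed joins. The quasi-quantale hypothesis enters only at directed
   joins: below a prefixed point s of an idiomatic nucleus, uv <= s iff
   u /\ v <= s, so meets may be traded for products, which distribute over
   directed joins. The same induction proves that f /\ \/X lies below every
   upper bound of the f /\ x, which is the frame law. *)
From Stdlib Require Import FunctionalExtensionality PropExtensionality ProofIrrelevance.

Section CompleteLatticeFacts.
Context {L : CompleteLattice}.
Local Notation le := (cl_le L).
Local Notation sup := (cl_sup L).
Local Notation meet := (cl_meet L).

Lemma le_refl x : le x x.
Proof. exact (proj1 (cl_po L) x). Qed.

Lemma le_trans {x y z : L} : le x y -> le y z -> le x z.
Proof. exact (proj1 (proj2 (cl_po L)) x y z). Qed.

Lemma le_antisym x y : le x y -> le y x -> x = y.
Proof. exact (proj2 (proj2 (cl_po L)) x y). Qed.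

Lemma sup_ub (X : L -> Prop) x : X x -> le x (sup X).
Proof. exact (proj1 (cl_sup_lub L X) x). Qed.

Lemma sup_least (X : L -> Prop) u : (forall x, X x -> le x u) -> le (sup X) u.
Proof. exact (proj2 (cl_sup_lub L X) u). Qed.

Lemma directed_pair {x y : L} : le x y -> directed L (fun z => z = x \/ z = y).
Proof.
  intro Hxy; split; [now exists x; left|].
  intros u v Hu Hv; exists y; split; [now right|].
  destruct Hu as [-> | ->], Hv as [-> | ->]; auto using le_refl.
Qed.

Lemma sup_pair {x y : L} : le x y -> sup (fun z => z = x \/ z = y) = y.
Proof.
  intro Hxy; apply le_antisym.
  - apply sup_least; intros z [-> | ->]; auto using le_refl.
  - apply sup_ub; now right.
Qed.

Lemma meet_lel a b : le (meet a b) a.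
Proof. apply sup_least; now intros x []. Qed.

Lemma meet_ler a b : le (meet a b) b.
Proof. apply sup_least; now intros x []. Qed.

Lemma meet_glb a b c : le c a -> le c b -> le c (meet a b).
Proof. intros; apply sup_ub; now split. Qed.

Lemma meet_mono {a b c d : L} : le a c -> le b d -> le (meet a b) (meet c d).
Proof.
  intros Hac Hbd; apply meet_glb.
  - exact (le_trans (meet_lel a b) Hac).
  - exact (le_trans (meet_ler a b) Hbd).
Qed.

Lemma meetC a b : meet a b = meet b a.
Proof. apply le_antisym; apply meet_glb; auto using meet_lel, meet_ler. Qed.

Definition inf (X : L -> Prop) : L := sup (fun l => forall x, X x -> le l x).

Lemma inf_lb (X : L -> Prop) x : X x -> le (inf X) x.
Proof. intro Hx; apply sup_least; auto. Qed.

Lemma inf_glb (X : L -> Prop) l : (forall x, X x -> le l x) -> le l (inf X).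
Proof. exact (sup_ub _ l). Qed.

End CompleteLatticeFacts.

Section Pataraia.
Context {L : CompleteLattice}.
Local Notation le := (cl_le L).

Variable F : (L -> L) -> Prop.
Variable Q : L -> Prop.
Hypothesis F_mono : forall p, F p -> forall x y, le x y -> le (p x) (p y).
Hypothesis F_infl : forall p, F p -> forall x, le x (p x).
Hypothesis Q_closed : forall p u, F p -> Q u -> Q (p u).
Hypothesis Q_sup : forall D, directed L D -> (forall d, D d -> Q d) -> Q (cl_sup L D).

Definition inflator_on (g : L -> L) : Prop :=
  (forall u, Q u -> Q (g u)) /\
  (forall u v, Q u -> Q v -> le u v -> le (g u) (g v)) /\
  (forall u, Q u -> le u (g u)).

Lemma inflator_on_id : inflator_on (fun x => x).
Proof. repeat split; auto using le_refl. Qed.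

Lemma inflator_on_comp g h : inflator_on g -> inflator_on h -> inflator_on (fun x => g (h x)).
Proof.
  intros [gQ [gmono ginfl]] [hQ [hmono hinfl]]; repeat split; auto.
  intros u Qu; exact (le_trans (hinfl u Qu) (ginfl _ (hQ u Qu))).
Qed.

Definition inflator_orbit (u : L) : L -> Prop :=
  fun w => exists g, inflator_on g /\ w = g u.

(* Composition makes the orbit directed: g u and h u both lie below g (h u). *)
Lemma inflator_orbit_directed u : Q u -> directed L (inflator_orbit u).
Proof.
  intro Qu; split; [exists u, (fun x => x); auto using inflator_on_id|].
  intros w1 w2 [g [Hg ->]] [h [Hh ->]].
  exists (g (h u)); split; [exists (fun x => g (h x)); auto using inflator_on_comp|].
  destruct Hg as [gQ [gmono ginfl]], Hh as [hQ [hmono hinfl]]; auto.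
Qed.

Definition orbit_sup (u : L) : L := cl_sup L (inflator_orbit u).

Lemma orbit_sup_inflator_on : inflator_on orbit_sup.
Proof.
  repeat split.
  - intros u Qu; apply Q_sup; [now apply inflator_orbit_directed|].
    intros d [g [[gQ _] ->]]; auto.
  - intros u v Qu Qv Huv; apply sup_least; intros w [g [Hg ->]].
    apply (le_trans (y := g v)); [now apply Hg|].
    apply sup_ub; now exists g.
  - intros u Qu; apply sup_ub; exists (fun x => x); auto using inflator_on_id.
Qed.

(* [p \o orbit_sup] is itself in the orbit, so it is absorbed by [orbit_sup]. *)
Lemma orbit_sup_prefixed p u : F p -> le (p (orbit_sup u)) (orbit_sup u).
Proof.
  intro Fp; apply sup_ub; exists (fun x => p (orbit_sup x)); split; [|reflexivity].
  destruct orbit_sup_inflator_on as [sQ [smono sinfl]]; repeat split.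
  - auto.
  - intros; apply (F_mono p Fp); auto.
  - intros v Qv; exact (le_trans (sinfl v Qv) (F_infl p Fp _)).
Qed.

Lemma pataraia a : Q a -> exists T, Q T /\ le a T /\ forall p, F p -> le (p T) T.
Proof.
  intro Qa; destruct orbit_sup_inflator_on as [sQ [_ sinfl]].
  exists (orbit_sup a); repeat split; auto.
  intros p Fp; apply orbit_sup_prefixed, Fp.
Qed.

End Pataraia.

Section QuasiQuantaleFacts.
Context {A : QuasiQuantale}.
Local Notation le := (cl_le A).
Local Notation mul := (qq_mul A).
Local Notation meet := (cl_meet A).

Lemma mul_monol x y a : le x y -> le (mul x a) (mul y a).
Proof.
  intro Hxy; rewrite <- (sup_pair Hxy), (qq_mul_supl A a (directed_pair Hxy)).
  apply sup_ub; exists x; split; [now left|reflexivity].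
Qed.

Lemma mul_monor x y a : le x y -> le (mul a x) (mul a y).
Proof.
  intro Hxy; rewrite <- (sup_pair Hxy), (qq_mul_supr A a (directed_pair Hxy)).
  apply sup_ub; exists x; split; [now left|reflexivity].
Qed.

Lemma mul_mono x y u v : le x y -> le u v -> le (mul x u) (mul y v).
Proof. intros; eapply le_trans; [apply mul_monol|apply mul_monor]; eassumption. Qed.

Section Nucleus.
Context {p : A -> A} (Hp : idiomatic_nucleus A p).

Lemma nucleus_mono {a b : A} : le a b -> le (p a) (p b).
Proof. exact (proj1 (proj1 (proj1 Hp)) a b). Qed.

Lemma nucleus_infl a : le a (p a).
Proof. exact (proj2 (proj1 (proj1 Hp)) a). Qed.

Lemma nucleus_mul a b : le (mul (p a) (p b)) (p (mul a b)).
Proof. exact (proj1 (proj2 (proj1 Hp)) a b). Qed.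

Lemma nucleus_mul_meet a b : p (mul a b) = p (meet a b).
Proof. exact (proj1 (proj2 (proj2 (proj1 Hp))) a b). Qed.

Lemma nucleus_meet a b : p (meet a b) = meet (p a) (p b).
Proof. exact (proj2 (proj2 (proj2 (proj1 Hp))) a b). Qed.

Lemma nucleus_idem a : p (p a) = p a.
Proof. exact (proj2 Hp a). Qed.

Lemma nucleus_image_prefixed a : le (p (p a)) (p a).
Proof. rewrite nucleus_idem; apply le_refl. Qed.

Lemma prefixed_mul_le_iff {s u v : A} : le (p s) s -> (le (mul u v) s <-> le (meet u v) s).
Proof.
  intro Hs; split; intro H; eapply le_trans; try apply nucleus_infl.
  - rewrite <- nucleus_mul_meet; exact (le_trans (nucleus_mono H) Hs).
  - rewrite nucleus_mul_meet; exact (le_trans (nucleus_mono H) Hs).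
Qed.

Lemma prefixed_meet_sup_le s c (D : A -> Prop) : le (p s) s -> directed A D ->
  (forall d, D d -> le (meet c d) s) -> le (meet c (cl_sup A D)) s.
Proof.
  intros Hs HD Hd; apply (prefixed_mul_le_iff Hs).
  rewrite (qq_mul_supr A c HD); apply sup_least; intros y [d [Dd ->]].
  apply (prefixed_mul_le_iff Hs); auto.
Qed.

End Nucleus.

Lemma nucleus_meet_step {f p : A -> A} (Hf : idiomatic_nucleus A f) (Hp : idiomatic_nucleus A p) {a v : A} :
  le a v -> le (meet (f a) (p v)) (meet (f (meet (f a) v)) (p (meet (f a) v))).
Proof.
  intro Hav; apply meet_glb.
  - apply (le_trans (meet_lel _ _)).
    rewrite (nucleus_meet Hf), (nucleus_idem Hf).
    apply meet_glb; [apply le_refl|exact (nucleus_mono Hf Hav)].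
  - rewrite (nucleus_meet Hp); apply meet_mono; [apply (nucleus_infl Hp)|apply le_refl].
Qed.

End QuasiQuantaleFacts.

Section IdiomaticNuclei.
Context {A : QuasiQuantale}.
Local Notation le := (cl_le A).
Local Notation meet := (cl_meet A).
Local Notation NI := (NI A).
Local Notation NI_le := (@NI_le A).

Lemma NI_partial_order : is_partial_order NI_le.
Proof.
  repeat split.
  - intros f a; apply le_refl.
  - intros f g h Hfg Hgh a; exact (le_trans (Hfg a) (Hgh a)).
  - intros [f Hf] [g Hg] Hfg Hgf.
    assert (f = g) as <-.
    { apply functional_extensionality; intro a; apply le_antisym; [apply Hfg|apply Hgf]. }
    f_equal; apply proof_irrelevance.
Qed.

Definition bottom_nucleus (a : A) : A := inf (fun w => exists g : NI, w = proj1_sig g a).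

Lemma bottom_nucleus_le (g : NI) a : le (bottom_nucleus a) (proj1_sig g a).
Proof. apply inf_lb; now exists g. Qed.

Lemma bottom_nucleus_mono a b : le a b -> le (bottom_nucleus a) (bottom_nucleus b).
Proof.
  intro Hab; apply inf_glb; intros s [g ->].
  exact (le_trans (bottom_nucleus_le g a) (nucleus_mono (proj2_sig g) Hab)).
Qed.

Lemma bottom_nucleus_is_nucleus : idiomatic_nucleus A bottom_nucleus.
Proof.
  repeat split.
  - exact bottom_nucleus_mono.
  - intro a; apply inf_glb; intros s [g ->]; apply (nucleus_infl (proj2_sig g)).
  - intros a b; apply inf_glb; intros s [g ->].
    eapply le_trans; [|apply (nucleus_mul (proj2_sig g))].
    apply mul_mono; apply bottom_nucleus_le.
  - intros a b; unfold bottom_nucleus; f_equal.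
    apply functional_extensionality; intro w; apply propositional_extensionality.
    split; intros [g ->]; exists g; now rewrite (nucleus_mul_meet (proj2_sig g)).
  - intros a b; apply le_antisym.
    + apply meet_glb; apply bottom_nucleus_mono; [apply meet_lel|apply meet_ler].
    + apply inf_glb; intros s [g ->]; rewrite (nucleus_meet (proj2_sig g)).
      apply meet_mono; apply bottom_nucleus_le.
  - intro a; apply le_antisym.
    + apply inf_glb; intros s [g ->].
      rewrite <- (nucleus_idem (proj2_sig g) a).
      exact (le_trans (bottom_nucleus_le g _)
               (nucleus_mono (proj2_sig g) (bottom_nucleus_le g a))).
    + apply inf_glb; intros s [g ->]; apply (nucleus_infl (proj2_sig g)).
Qed.

Section Join.
Variable X : NI -> Prop.

Definition join_generator (p : A -> A) : Prop :=
  p = bottom_nucleus \/ exists x, X x /\ p = proj1_sig x.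

Lemma join_generator_is_nucleus {p : A -> A} : join_generator p -> idiomatic_nucleus A p.
Proof. intros [-> | [x [_ ->]]]; [exact bottom_nucleus_is_nucleus|exact (proj2_sig x)]. Qed.

Definition common_prefixed (s : A) : Prop := forall p, join_generator p -> le (p s) s.

Definition join_closure (a : A) : A := inf (fun s => common_prefixed s /\ le a s).

Lemma join_closure_least a s : common_prefixed s -> le a s -> le (join_closure a) s.
Proof. intros; now apply inf_lb. Qed.

Lemma join_closure_infl a : le a (join_closure a).
Proof. apply inf_glb; now intros s []. Qed.

Lemma join_closure_prefixed a : common_prefixed (join_closure a).
Proof.
  intros p Gp; apply inf_glb; intros s [Ss Has].
  apply (le_trans (y := p s)); [|exact (Ss p Gp)].
  apply (nucleus_mono (join_generator_is_nucleus Gp)), join_closure_least; assumption.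
Qed.

Lemma join_closure_mono a b : le a b -> le (join_closure a) (join_closure b).
Proof.
  intro Hab; apply join_closure_least; [apply join_closure_prefixed|].
  exact (le_trans Hab (join_closure_infl b)).
Qed.

Lemma join_closure_mul_le_iff a u v :
  le (qq_mul A u v) (join_closure a) <-> le (meet u v) (join_closure a).
Proof.
  apply (prefixed_mul_le_iff bottom_nucleus_is_nucleus).
  apply join_closure_prefixed; now left.
Qed.

Lemma join_closure_ind (Q : A -> Prop) :
  (forall p u, join_generator p -> Q u -> Q (p u)) ->
  (forall D, directed A D -> (forall d, D d -> Q d) -> Q (cl_sup A D)) ->
  forall a, Q a -> exists T, Q T /\ le (join_closure a) T.
Proof.
  intros HQ HD a Qa.
  destruct (pataraia join_generator Q) with (a := a) as [T [QT [HaT HT]]]; auto.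
  - intros p Gp x y; exact (nucleus_mono (join_generator_is_nucleus Gp)).
  - intros p Gp; exact (nucleus_infl (join_generator_is_nucleus Gp)).
  - exists T; split; [exact QT|now apply join_closure_least].
Qed.

Lemma join_closure_meet_le a c s :
  common_prefixed s -> le (meet c a) s -> le (meet c (join_closure a)) s.
Proof.
  intros Ss Hs.
  destruct (join_closure_ind (fun u => le (meet c u) s)) with (a := a)
    as [T [HT HaT]]; [| |exact Hs|].
  - intros p u Gp Hu; pose proof (join_generator_is_nucleus Gp) as Hp.
    apply (le_trans (meet_mono (nucleus_infl Hp c) (le_refl _))).
    rewrite <- (nucleus_meet Hp).
    exact (le_trans (nucleus_mono Hp Hu) (Ss p Gp)).
  - intros D HD HDs; apply (prefixed_meet_sup_le bottom_nucleus_is_nucleus);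
      [apply Ss; now left|exact HD|exact HDs].
  - exact (le_trans (meet_mono (le_refl c) HaT) HT).
Qed.

Lemma join_closure_meet a b : join_closure (meet a b) = meet (join_closure a) (join_closure b).
Proof.
  apply le_antisym.
  - apply meet_glb; apply join_closure_mono; [apply meet_lel|apply meet_ler].
  - apply join_closure_meet_le; [apply join_closure_prefixed|].
    rewrite meetC; apply join_closure_meet_le; [apply join_closure_prefixed|].
    rewrite meetC; apply join_closure_infl.
Qed.

Lemma join_closure_mul_meet a b : join_closure (qq_mul A a b) = join_closure (meet a b).
Proof.
  apply le_antisym; apply join_closure_least; try apply join_closure_prefixed;
    apply join_closure_mul_le_iff, join_closure_infl.
Qed.

Lemma join_closure_is_nucleus : idiomatic_nucleus A join_closure.
Proof.
  repeat split.
  - exact join_closure_mono.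
  - exact join_closure_infl.
  - intros a b; apply join_closure_mul_le_iff.
    rewrite join_closure_mul_meet, join_closure_meet; apply le_refl.
  - exact join_closure_mul_meet.
  - exact join_closure_meet.
  - intro a; apply le_antisym; [|apply join_closure_infl].
    apply join_closure_least; [apply join_closure_prefixed|apply le_refl].
Qed.

Definition NI_sup : NI := exist _ join_closure join_closure_is_nucleus.

Lemma NI_sup_lub : is_lub NI_le X NI_sup.
Proof.
  split.
  - intros x Xx a; simpl.
    apply (le_trans (nucleus_mono (proj2_sig x) (join_closure_infl a))).
    apply join_closure_prefixed; right; now exists x.
  - intros u Hu a; simpl.
    apply join_closure_least; [|apply (nucleus_infl (proj2_sig u))].
    intros p [-> | [x [Xx ->]]].
    + exact (le_trans (bottom_nucleus_le u _) (nucleus_image_prefixed (proj2_sig u) a)).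
    + exact (le_trans (Hu x Xx _) (nucleus_image_prefixed (proj2_sig u) a)).
Qed.

End Join.

Definition NI_meet (f g : NI) : NI.
Proof.
  exists (fun a => meet (proj1_sig f a) (proj1_sig g a)).
  destruct f as [f Hf], g as [g Hg]; simpl; repeat split.
  - intros a b Hab; apply meet_mono; [apply (nucleus_mono Hf)|apply (nucleus_mono Hg)]; exact Hab.
  - intro a; apply meet_glb; [apply (nucleus_infl Hf)|apply (nucleus_infl Hg)].
  - intros a b; apply meet_glb.
    + eapply le_trans; [|apply (nucleus_mul Hf)]; apply mul_mono; apply meet_lel.
    + eapply le_trans; [|apply (nucleus_mul Hg)]; apply mul_mono; apply meet_ler.
  - intros a b; now rewrite (nucleus_mul_meet Hf), (nucleus_mul_meet Hg).
  - intros a b; rewrite (nucleus_meet Hf), (nucleus_meet Hg).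
    apply le_antisym; repeat apply meet_glb;
      eauto using le_trans, meet_lel, meet_ler.
  - intro a; apply le_antisym; [|apply meet_glb; [apply (nucleus_infl Hf)|apply (nucleus_infl Hg)]].
    apply meet_mono.
    + exact (le_trans (nucleus_mono Hf (meet_lel _ _)) (nucleus_image_prefixed Hf a)).
    + exact (le_trans (nucleus_mono Hg (meet_ler _ _)) (nucleus_image_prefixed Hg a)).
Defined.

Lemma NI_meet_glb f g : is_glb2 NI_le f g (NI_meet f g).
Proof.
  repeat split.
  - intro a; apply meet_lel.
  - intro a; apply meet_ler.
  - intros u Hf Hg a; apply meet_glb; auto.
Qed.

(* Induction along [join_closure X a] over the elements above [a] that meet [f a]
   below [u a]. *)
Lemma NI_meet_join_le {f u : NI} {X : NI -> Prop} :
  (forall x, X x -> NI_le (NI_meet f x) u) ->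
  forall a, le (meet (proj1_sig f a) (join_closure X a)) (proj1_sig u a).
Proof.
  intros Hfx a; pose proof (proj2_sig f) as Hf; pose proof (proj2_sig u) as Hu.
  destruct (join_closure_ind X
              (fun v => le a v /\ le (meet (proj1_sig f a) v) (proj1_sig u a)))
    with (a := a) as [T [[_ HT] HaT]].
  - intros p v Gp [Hav Hv]; pose proof (join_generator_is_nucleus _ Gp) as Hp.
    split; [exact (le_trans Hav (nucleus_infl Hp v))|].
    apply (le_trans (nucleus_meet_step Hf Hp Hav)).
    set (w := meet (proj1_sig f a) v).
    apply (le_trans (y := proj1_sig u w)).
    + destruct Gp as [-> | [x [Xx ->]]].
      * exact (le_trans (meet_ler _ _) (bottom_nucleus_le u w)).
      * exact (Hfx x Xx w).
    + exact (le_trans (nucleus_mono Hu Hv) (nucleus_image_prefixed Hu a)).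
  - intros D HD HDQ; split.
    + destruct HD as [[d Dd] _].
      exact (le_trans (proj1 (HDQ d Dd)) (sup_ub _ _ Dd)).
    + apply (prefixed_meet_sup_le Hu); [apply (nucleus_image_prefixed Hu)|exact HD|].
      intros d Dd; exact (proj2 (HDQ d Dd)).
  - split; [apply le_refl|exact (le_trans (meet_ler _ _) (nucleus_infl Hu a))].
  - exact (le_trans (meet_mono (le_refl _) HaT) HT).
Qed.

End IdiomaticNuclei.

Theorem proposition3p13 (A : QuasiQuantale) : is_frame (@NI_le A).
Proof.
  split; [exact NI_partial_order|split; [intro X; exists (NI_sup X); apply NI_sup_lub|]].
  intros f X s m [Hs_ub Hs_least] [Hmf [Hms Hm_glb]]; split.
  - intros y [x [Xx [Hyf [Hyx _]]]].
    apply Hm_glb; [exact Hyf|intro a; exact (le_trans (Hyx a) (Hs_ub x Xx a))].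
  - intros u Hu a.
    assert (Hfx : forall x, X x -> NI_le (NI_meet f x) u).
    { intros x Xx; apply Hu; exists x; split; [exact Xx|apply NI_meet_glb]. }
    assert (Hs_join : NI_le s (NI_sup X)) by exact (Hs_least _ (proj1 (NI_sup_lub X))).
    apply (le_trans (y := cl_meet A (proj1_sig f a) (join_closure X a))).
    + apply meet_glb; [exact (Hmf a)|exact (le_trans (Hms a) (Hs_join a))].
    + exact (NI_meet_join_le Hfx a).
Qed.
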